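(* Let $\mathbf{M}$ be a real $n\times n$ non-negative matrix whose columns all sum to $\alpha$, written in lower block-triangular form with irreducible diagonal blocks $\mathbf{B}_0,\dots,\mathbf{B}_{t-1}$ and coordinate sets $S_0,\dots,S_{t-1}$. Let $s$ be the algebraic multiplicity of the eigenvalue $\rho(\mathbf{M})=\alpha$ and let $j_0,\dots,j_{s-1}$ be the indices of the diagonal blocks having eigenvalue $\alpha$. For each $r\in[s]$ let $\mathbf{l}_{j_r}$ be a left eigenvector of $\mathbf{M}$ for $\alpha$ which equals $1$ on every coordinate of $S_{j_r}$, vanishes on $S_{j_{r'}}$ for $r'\neq r$, and satisfies $\operatorname{supp}(\mathbf{l}_{j_r})\subseteq S_{j_r}\cup\bigcup_{i<j_r,\,i\rightsquigarrow j_r}S_i$. Then \[\sum_{r\in[s]}\mathbf{l}_{j_r}=\mathbf{1},\] the all-ones row vector.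
   Context: Lower block-triangular form: $\mathbf{M}$ has square irreducible non-negative diagonal blocks $\mathbf{B}_0,\dots,\mathbf{B}_{t-1}$ of sizes $n_0,\dots,n_{t-1}$, zero blocks above the diagonal, and non-negative blocks $*_{i,j}$ ($n_i\times n_j$) below the diagonal; $S_j=\{\sum_{i<j}n_i,\dots,\sum_{i\le j}n_i-1\}$. For $i<j$, $i\rightsquigarrow j$ means there is a sequence $i=i_0<i_1<\dots<i_m=j$ with $*_{i_{r+1},i_r}\neq\mathbf{0}$ for all $r$. $[s]=\{0,\dots,s-1\}$. *)

From HB Require Import structures.
From mathcomp Require Import all_boot all_order all_algebra.
From mathcomp Require Import reals.
Set Implicit Arguments. Unset Strict Implicit. Unset Printing Implicit Defensive.
Import Order.TTheory GRing.Theory Num.Theory.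
Local Open Scope ring_scope.

Section BlockDefs.
Variables (R : realType) (n t : nat).
Variable (M : 'M[R]_n) (nsz : 'I_t -> nat).

Definition offs (j : 'I_t) : nat := (\sum_(i < t | (i < j)%N) nsz i)%N.

Definition Sset (j : 'I_t) : {set 'I_n} :=
  [set k : 'I_n | (offs j <= k < offs j + nsz j)%N].

(* entries of M indexed by naturals (0 outside the range) *)
Definition Mnat (k l : nat) : R :=
  if (insub k : option 'I_n) is Some i then
    if (insub l : option 'I_n) is Some j then M i j else 0
  else 0.

Definition Bblk (j : 'I_t) : 'M[R]_(nsz j) :=
  \matrix_(a < nsz j, b < nsz j) Mnat (offs j + a) (offs j + b).

Definition blockNZ (a b : 'I_t) : bool :=
  [exists k in Sset a, exists l in Sset b, M k l != 0].

Definition leadsto (i j : 'I_t) : bool :=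
  (i < j)%N && connect [rel a b : 'I_t | (a < b)%N && blockNZ b a] i j.

End BlockDefs.

(* irreducible nonnegative square matrix: its digraph (edge a -> b iff
   A a b > 0) is strongly connected (1x1 matrices are irreducible) *)
Definition irreducible_mx (R : realType) (m : nat) (A : 'M[R]_m) : bool :=
  [forall a, forall b, connect [rel x y : 'I_m | 0 < A x y] a b].

(** The all-ones row vector is a left eigenvector of [M] for [alpha], hence so
    is [v := sum_r l_r - 1]; moreover [v] vanishes on every block [S_{j_r}].
    Going through the blocks from the last to the first, the restriction of [v]
    to [S_b] is, by block-triangularity and the vanishing of [v] on the later
    blocks, a left eigenvector of [B_b] for [alpha]: so it is zero unless [alpha]
    is an eigenvalue of [B_b], i.e. unless [b] is some [j_r], where [v] vanishes
    anyway.  Hence [v = 0]. *)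

From HB Require Import structures.
From mathcomp Require Import all_boot all_order all_algebra.
From mathcomp Require Import reals.
From mathcomp Require Import zify.
Import Order.TTheory GRing.Theory Num.Theory.
Local Open Scope ring_scope.

Set Implicit Arguments.
Unset Strict Implicit.
Unset Printing Implicit Defensive.

Lemma ord_downward_ind (t : nat) (P : 'I_t -> Prop) :
  (forall b : 'I_t, (forall a : 'I_t, (b < a)%N -> P a) -> P b) ->
  forall b, P b.
Proof.
move=> IH; suff Pm m (b : 'I_t) : (t - m <= b)%N -> P b.
  by move=> b; apply: (Pm t); rewrite subnn.
elim: m b => [|m IHm] b hb; first by move: hb; rewrite subn0 leqNgt ltn_ord.
by apply: IH => a hab; apply: IHm; lia.
Qed.

Lemma mulmx_const1_col_sums (R : comPzRingType) (m n : nat) (M : 'M[R]_(m, n))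
    (alpha : R) :
  (forall j, \sum_(i < m) M i j = alpha) ->
  const_mx 1 *m M = alpha *: (const_mx 1 : 'rV_n).
Proof.
move=> Hcol; apply/rowP => j; rewrite !mxE mulr1 -(Hcol j).
by apply: eq_bigr => i _; rewrite mxE mul1r.
Qed.

Section BlockOffsets.
Variables (t : nat) (nsz : 'I_t -> nat).

Definition psum (m : nat) : nat := (\sum_(i < t | (i < m)%N) nsz i)%N.

Lemma psumS (j : 'I_t) : psum j.+1 = (psum j + nsz j)%N.
Proof.
rewrite /psum (bigD1 j) //= addnC; congr (_ + _)%N.
by apply: eq_bigl => i; rewrite ltnS ltn_neqAle andbC.
Qed.

Lemma leq_psum m m' : (m <= m')%N -> (psum m <= psum m')%N.
Proof.
move=> le_mm'; rewrite /psum [leqRHS]big_mkcond [leqLHS]big_mkcond.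
by apply: leq_sum => i _; case: ifP => // /leq_trans->.
Qed.

Lemma psum_t : psum t = (\sum_(i < t) nsz i)%N.
Proof. by apply: eq_bigl => i; rewrite ltn_ord. Qed.

Lemma offs_add_size_leq (j : 'I_t) :
  (offs nsz j + nsz j <= \sum_(i < t) nsz i)%N.
Proof. by rewrite -[offs _ _]/(psum j) -psumS -psum_t leq_psum. Qed.

Lemma mem_some_block k : (k < \sum_(i < t) nsz i)%N ->
  exists j : 'I_t, (offs nsz j <= k < offs nsz j + nsz j)%N.
Proof.
rewrite -psum_t; suff: forall m, (m <= t)%N -> (k < psum m)%N ->
    exists j : 'I_t, (psum j <= k < psum j + nsz j)%N by apply.
elim=> [|m IHm] mt Hk; first by move: Hk; rewrite /psum big_pred0.
have [lt_k|le_k] := ltnP k (psum m); first exact: IHm (ltnW mt) lt_k.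
by exists (Ordinal mt); rewrite le_k -(psumS (Ordinal mt)).
Qed.

End BlockOffsets.

Section BlockTriangular.
Variables (R : realType) (n t : nat) (M : 'M[R]_n) (nsz : 'I_t -> nat).
Hypothesis Hsum : n = (\sum_(i < t) nsz i)%N.

Local Notation S := (Sset n nsz).

Lemma blk_ord_proof (b : 'I_t) (c : 'I_(nsz b)) : (offs nsz b + c < n)%N.
Proof. by rewrite Hsum (leq_trans _ (offs_add_size_leq nsz b)) ?ltn_add2l. Qed.

Definition blk_ord (b : 'I_t) (c : 'I_(nsz b)) : 'I_n :=
  Ordinal (blk_ord_proof c).

Definition blk_row (v : 'rV[R]_n) (b : 'I_t) : 'rV[R]_(nsz b) :=
  \row_c v 0 (blk_ord c).

Lemma blk_ord_inj b : injective (@blk_ord b).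
Proof. by move=> c c' /(congr1 val) /addnI /val_inj. Qed.

Lemma Sset_blk_ord b : S b = [set blk_ord c | c in [set: 'I_(nsz b)]].
Proof.
apply/setP => k; apply/idP/imsetP; last first.
  by move=> [c _ ->]; rewrite inE /= leq_addr ltn_add2l ltn_ord.
rewrite inE => /andP[le_k lt_k].
have kb : (k - offs nsz b < nsz b)%N by rewrite ltn_subLR.
by exists (Ordinal kb); rewrite ?inE //; apply: val_inj; rewrite /= subnKC.
Qed.

Lemma Sset_cover (k : 'I_n) : exists j, k \in S j.
Proof.
have [|j Hj] := @mem_some_block t nsz k; first by rewrite -Hsum.
by exists j; rewrite inE.
Qed.

Lemma Bblk_blk_ord b a c : Bblk M nsz b a c = M (blk_ord a) (blk_ord c).
Proof. by rewrite mxE /Mnat !(valK (blk_ord _)). Qed.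

Lemma blk_row_eq0 v b : blk_row v b = 0 -> {in S b, forall k, v 0 k = 0}.
Proof.
move=> v0 k; rewrite Sset_blk_ord => /imsetP[c _ ->].
by have := congr1 (fun w : 'rV_(nsz b) => w 0 c) v0; rewrite !mxE.
Qed.

Hypothesis Hlow : forall (a b : 'I_t) (k l : 'I_n), (a < b)%N ->
  k \in S a -> l \in S b -> M k l = 0.

Lemma blk_row_left_eigen (alpha : R) (v : 'rV[R]_n) (b : 'I_t) :
  v *m M = alpha *: v ->
  (forall a : 'I_t, (b < a)%N -> {in S a, forall k, v 0 k = 0}) ->
  blk_row v b *m Bblk M nsz b = alpha *: blk_row v b.
Proof.
move=> Hv Hlater; apply/rowP => c; rewrite !mxE.
have := congr1 (fun w : 'rV_n => w 0 (blk_ord c)) Hv; rewrite !mxE => <-.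
rewrite (bigID (mem (S b))) /= [X in _ + X]big1 ?addr0.
  rewrite Sset_blk_ord big_imset /=; last by move=> ? ? _ _ /blk_ord_inj.
  by rewrite big_set; apply: eq_bigr => a _; rewrite Bblk_blk_ord mxE.
move=> k kNb; have [a ka] := Sset_cover k.
have [ab|ba|/val_inj eab] := ltngtP a b.
- by rewrite (Hlow ab ka) ?mulr0 // Sset_blk_ord imset_f ?inE.
- by rewrite (Hlater a ba k ka) mul0r.
- by move: ka; rewrite eab => kb; rewrite kb in kNb.
Qed.

Lemma left_eigen_eq0 (alpha : R) (v : 'rV[R]_n) :
  v *m M = alpha *: v ->
  (forall b, eigenvalue (Bblk M nsz b) alpha -> {in S b, forall k, v 0 k = 0}) ->
  v = 0.
Proof.
move=> Hv Heig.
have Hblocks b : {in S b, forall k, v 0 k = 0}.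
  elim/ord_downward_ind: b => b Hlater.
  have [/blk_row_eq0 //|nz_w] := eqVneq (blk_row v b) 0.
  apply: Heig; apply/eigenvalueP; exists (blk_row v b) => //.
  exact: blk_row_left_eigen.
apply/rowP => k; have [b kb] := Sset_cover k.
by rewrite (Hblocks b k kb) mxE.
Qed.

End BlockTriangular.

Theorem mainTheorem3 (R : realType) (n t : nat) (M : 'M[R]_n) (alpha : R)
    (nsz : 'I_t -> nat)
    (Hpos : forall i, (0 < nsz i)%N)
    (Hsum : n = (\sum_(i < t) nsz i)%N)
    (Hnneg : forall i j, 0 <= M i j)
    (Hcol : forall j, \sum_(i < n) M i j = alpha)
    (Hlow : forall (a b : 'I_t) (k l : 'I_n), (a < b)%N ->
        k \in Sset n nsz a -> l \in Sset n nsz b -> M k l = 0)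
    (Hirr : forall j, irreducible_mx (Bblk M nsz j))
    (s : nat) (Hs : s = mup alpha (char_poly M))
    (jj : 'I_s -> 'I_t)
    (Hjinc : forall r r' : 'I_s, (r < r')%N -> (jj r < jj r')%N)
    (Hjeig : forall i : 'I_t, eigenvalue (Bblk M nsz i) alpha <-> exists r, jj r = i)
    (l : 'I_s -> 'rV[R]_n)
    (Hleig : forall r, l r *m M = alpha *: l r)
    (Hone : forall r k, k \in Sset n nsz (jj r) -> l r 0 k = 1)
    (Hzero : forall r r' k, r' != r -> k \in Sset n nsz (jj r') -> l r 0 k = 0)
    (Hsupp : forall r k, l r 0 k != 0 ->
        k \in Sset n nsz (jj r) \/
        exists i : 'I_t, leadsto M nsz i (jj r) /\ k \in Sset n nsz i) :
  \sum_(r < s) l r = const_mx 1.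
Proof.
apply/eqP; rewrite -subr_eq0; apply/eqP.
apply: (left_eigen_eq0 Hsum Hlow (alpha := alpha)).
  rewrite mulmxBl scalerBr mulmx_suml scaler_sumr (mulmx_const1_col_sums Hcol).
  by congr (_ - _); apply: eq_bigr => r _; exact: Hleig.
move=> b /Hjeig[r <-] k kr.
rewrite !mxE summxE (bigD1 r) //= Hone // big1 ?addr0 ?subrr // => r' r'r.
by rewrite (Hzero r' r) // eq_sym.
Qed.
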